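(* Let $\Gamma=\langle V,(w_u)_{u\in V},\alpha,\beta\rangle$ be a star celebrity game with $\beta>1$. If $T$ is a Nash equilibrium graph of $\Gamma$ that is a tree, then $\mathrm{diam}(T)\le\beta+1$.
   Context: A celebrity game $\Gamma=\langle V,(w_u)_{u\in V},\alpha,\beta\rangle$ consists of a set of players $V=\{1,\dots,n\}$, celebrity weights $w_u>0$, a link cost $\alpha>0$ and a critical distance $\beta$ with $1\le\beta\le n-1$. A strategy of player $u$ is a set $S_u\subseteq V\setminus\{u\}$; a strategy profile is $S=(S_1,\dots,S_n)$; its outcome graph $G[S]$ is the undirected graph on $V$ with edge set $\{\{u,v\}: u\in S_v\text{ or }v\in S_u\}$. With $d_G$ the graph distance (infinite between different connected components), the cost of player $u$ is $c_u(S)=\alpha|S_u|+\sum_{v:\,d_{G[S]}(u,v)>\beta}w_v$. $S$ is a Nash equilibrium if no player can strictly decrease its cost by changing only its own strategy; a graph $G$ is a Nash equilibrium graph if $G=G[S]$ for some Nash equilibrium $S$. $\Gamma$ is a star celebrity game if it has a Nash equilibrium graph that is connected. $\mathrm{diam}(T)=\max_{u,v}d_T(u,v)$. *)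

From mathcomp Require Import all_boot all_order all_algebra.
Set Implicit Arguments. Unset Strict Implicit. Unset Printing Implicit Defensive.
Import Order.TTheory GRing.Theory Num.Theory.
Local Open Scope ring_scope.

(* Players are V = 'I_n.  A graph on V is a relation G : rel 'I_n
   (outcome graphs are symmetric and irreflexive). *)

(* dist_le G k u v  <=>  d_G(u,v) <= k, i.e. there is a walk of length at most k
   from u to v (d_G = +infinity between different components). *)
Fixpoint dist_le n (G : rel 'I_n) (k : nat) (u v : 'I_n) : bool :=
  match k with
  | 0 => u == v
  | k'.+1 => dist_le G k' u v || [exists w, dist_le G k' u w && G w v]
  end.

Definition profile n := 'I_n -> {set 'I_n}.

Definition valid_strategy n (u : 'I_n) (A : {set 'I_n}) : Prop := u \notin A.
Definition valid_profile n (S : profile n) : Prop := forall u, valid_strategy u (S u).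

Definition outcome n (S : profile n) : rel 'I_n :=
  fun u v => (u \in S v) || (v \in S u).

Definition cost (R : realFieldType) n (w : 'I_n -> R) (alpha : R) (beta : nat)
  (S : profile n) (u : 'I_n) : R :=
  alpha * (#|S u|)%:R + \sum_(v | ~~ dist_le (outcome S) beta u v) w v.

Definition deviate n (S : profile n) (u : 'I_n) (A : {set 'I_n}) : profile n :=
  fun v => if v == u then A else S v.

Definition nash (R : realFieldType) n (w : 'I_n -> R) (alpha : R) (beta : nat)
  (S : profile n) : Prop :=
  valid_profile S /\
  forall u (A : {set 'I_n}), valid_strategy u A ->
    cost w alpha beta S u <= cost w alpha beta (deviate S u A) u.

Definition nash_graph (R : realFieldType) n (w : 'I_n -> R) (alpha : R) (beta : nat)
  (G : rel 'I_n) : Prop :=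
  exists S : profile n, nash w alpha beta S /\ G =2 outcome S.

Definition connected_graph n (G : rel 'I_n) : Prop :=
  forall u v, exists k, dist_le G k u v.

Definition acyclic_graph n (G : rel 'I_n) : Prop :=
  forall (x : 'I_n) (s : seq 'I_n),
    uniq (x :: s) -> (2 <= size s)%N -> path G x s -> ~~ G (last x s) x.

Definition is_tree n (G : rel 'I_n) : Prop := connected_graph G /\ acyclic_graph G.

Definition star_celebrity_game (R : realFieldType) n (w : 'I_n -> R) (alpha : R)
  (beta : nat) : Prop :=
  exists G, nash_graph w alpha beta G /\ connected_graph G.

Definition diam_le n (G : rel 'I_n) (k : nat) : Prop :=
  forall u v, dist_le G k u v.

From mathcomp Require Import all_boot all_order all_algebra.
From mathcomp Require Import lra.
Set Implicit Arguments. Unset Strict Implicit. Unset Printing Implicit Defensive.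
Import Order.TTheory GRing.Theory Num.Theory.

(* Suppose a tree equilibrium had diameter at least beta + 2 and take a diametral pair a, b.
   Both are leaves, with neighbours a1 and b1, and b is farther than beta from a and a1.
   The link {a, a1} is bought by a: if a1 owned it, dropping it would cost a1 at most w a, so
   alpha <= w a, whereas b buying a link to a would gain at least w a + w a1, so
   w a + w a1 <= alpha.  Hence a may move its link from a1 to b1; writing F c for the weight
   of the vertices farther than beta - 1 from c, equilibrium gives F a1 + w a <= F b1.
   Symmetrically F b1 + w b <= F a1, a contradiction. *)

Section Distance.
Variable n : nat.
Implicit Types (F : rel 'I_n) (u v x : 'I_n).

Lemma dist_leS F k u v : dist_le F k u v -> dist_le F k.+1 u v.
Proof. by move=> h /=; rewrite h. Qed.

Lemma dist_le_mono F k m u v : (k <= m)%N -> dist_le F k u v -> dist_le F m u v.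
Proof.
move=> /subnKC <-; elim: (m - k)%N => [|d IH]; first by rewrite addn0.
by move=> h; rewrite addnS; apply/dist_leS/IH.
Qed.

Lemma dist_le_refl F k u : dist_le F k u u.
Proof. exact: (dist_le_mono (k:=0)) (eqxx u). Qed.

Lemma dist_le_stepr F k u x v : dist_le F k u x -> F x v -> dist_le F k.+1 u v.
Proof. by move=> h e /=; apply/orP; right; apply/existsP; exists x; rewrite h e. Qed.

Lemma dist_le_edge F k u v : (1 <= k)%N -> F u v -> dist_le F k u v.
Proof. by move=> k1 e; apply: (dist_le_mono k1); exact: (dist_le_stepr (k:=0) (eqxx u) e). Qed.

Lemma dist_le_stepl F k x u v : F x u -> dist_le F k u v -> dist_le F k.+1 x v.
Proof.
elim: k v => [|k IH] v e; first by move/eqP=> <-; exact: (dist_le_stepr (k:=0) (eqxx x) e).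
case/orP=> [h|/existsP [y /andP [h1 h2]]]; first exact/dist_leS/IH.
exact: dist_le_stepr (IH _ e h1) h2.
Qed.

Lemma dist_le_sym F k u v : symmetric F -> dist_le F k u v -> dist_le F k v u.
Proof.
move=> sF; elim: k v => [|k IH] v; first by rewrite /= eq_sym.
case/orP=> [h|/existsP [x /andP [h1 h2]]]; first exact/dist_leS/IH.
by apply: (dist_le_stepl (u:=x)); [rewrite sF | apply: IH].
Qed.

Lemma dist_leSl F k u v : dist_le F k.+1 u v ->
  u = v \/ exists2 y, F u y & dist_le F k y v.
Proof.
elim: k v => [|k IH] v.
  case/orP=> [/eqP->|/existsP [x /andP [/eqP <- h]]]; first by left.
  by right; exists v; rewrite //= eqxx.
case/orP=> [/IH [->|[y e hy]]|/existsP [x /andP [h1 h2]]]; first by left.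
  by right; exists y => //; apply: dist_leS.
case: (IH _ h1) => [ux|[y e hy]]; first by right; exists v; rewrite ?ux ?dist_le_refl.
by right; exists y => //; apply: dist_le_stepr h2.
Qed.

Lemma sub_dist_le F1 F2 k u v : subrel F1 F2 ->
  dist_le F1 k u v -> dist_le F2 k u v.
Proof.
move=> s; elim: k v => [|k IH] v //.
case/orP=> [h|/existsP [x /andP [h1 h2]]]; first exact/dist_leS/IH.
exact: dist_le_stepr (IH _ h1) (s _ _ h2).
Qed.

Lemma eq_dist_le F1 F2 k : F1 =2 F2 -> dist_le F1 k =2 dist_le F2 k.
Proof. by move=> e u v; apply/idP/idP; apply: sub_dist_le => x y; rewrite e. Qed.

End Distance.

Section DeleteVertex.
Variable n : nat.
Implicit Types (F : rel 'I_n) (u v x y a c : 'I_n).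

Definition del_vertex F a : rel 'I_n := fun u v => [&& F u v, u != a & v != a].

Definition pendant F a c := forall x, F a x = (x == c).

(* A walk through [a] enters and leaves it via [c], so it can be shortcut at [c]. *)
Lemma dist_le_avoid F a c : symmetric F -> (forall x, F a x -> x = c) -> c != a ->
  forall k u, u != a ->
  (forall v, v != a -> dist_le F k u v -> dist_le (del_vertex F a) k u v) /\
  (dist_le F k u a -> dist_le (del_vertex F a) k.-1 u c).
Proof.
move=> sF Fa ca; elim=> [|k IH] u ua.
  by split=> [v _ //|/= /eqP ua']; rewrite ua' eqxx in ua.
have [IHv IHa] := IH u ua; split.
  move=> v va /orP [h|/existsP [x /andP [h1 h2]]]; first exact/dist_leS/IHv.
  have [xa|xa] := eqVneq x a.
    have vc : v = c by apply: Fa; rewrite -xa.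
    by rewrite vc; apply: (dist_le_mono _ (IHa _)); rewrite ?leqW ?leq_pred // -xa.
  by apply: dist_le_stepr (IHv _ xa h1) _; rewrite /del_vertex h2 xa va.
move=> /orP [h|/existsP [x /andP [h1 h2]]].
  exact: (dist_le_mono (leq_pred _) (IHa h)).
have xc : x = c by apply: Fa; rewrite sF.
by rewrite xc in h1; apply: IHv.
Qed.

Lemma dist_le_del_vertex F a c k u v :
  symmetric F -> (forall x, F a x -> x = c) -> c != a -> u != a -> v != a ->
  dist_le (del_vertex F a) k u v = dist_le F k u v.
Proof.
move=> sF Fa ca ua va; apply/idP/idP; first by apply: sub_dist_le => x y /andP [].
by have [h _] := dist_le_avoid sF Fa ca k ua; apply: h.
Qed.

Lemma dist_le_pendant F a c k v : pendant F a c -> v != a ->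
  dist_le F k.+1 a v = dist_le F k c v.
Proof.
move=> Fa va; apply/idP/idP; last by apply: dist_le_stepl; rewrite Fa.
by case/dist_leSl => [av|[y]]; [rewrite av eqxx in va | rewrite Fa => /eqP ->].
Qed.

End DeleteVertex.

Section Trees.
Variable n : nat.
Implicit Types (F : rel 'I_n) (u v x y a b : 'I_n).

Lemma connect_del_vertex F a k u v : dist_le F k u v -> u != a ->
  ~~ dist_le F k.-1 a v -> connect (del_vertex F a) u v.
Proof.
elim: k u => [|k IH] u; first by move=> /eqP -> _ _; apply: connect0.
case/dist_leSl => [->|[y e h]] ua far_av; first exact: connect0.
have ya : y != a by apply: contraNneq far_av => <-.
apply: (connect_trans (y:=y)); first by apply: connect1; rewrite /del_vertex e ua ya.
by apply: IH => //; apply: contra far_av; apply: dist_le_mono; apply: leq_pred.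
Qed.

Lemma path_del_vertex F a y p : path (del_vertex F a) y p -> a \notin p.
Proof.
elim: p y => [|z p IH] y //= /andP [/and3P [_ _ za] h].
by rewrite in_cons negb_or eq_sym za (IH z h).
Qed.

Lemma acyclic_del_vertex F a y y' : acyclic_graph F -> symmetric F ->
  F a y -> F a y' -> y != y' -> ~~ connect (del_vertex F a) y y'.
Proof.
move=> acF sF ay ay' yy'; apply/negP => /connectP [p p_path y'E].
case: (shortenP p_path) y'E => q q_path q_uniq _ y'E.
case: q q_path q_uniq y'E => [_ _ y'y|z q q_path q_uniq y'E]; first by rewrite y'y eqxx in yy'.
have a_zq := path_del_vertex q_path.
move: (q_path) => /= /andP [/and3P [_ ya _] _].
have uniq_ayzq : uniq [:: a, y, z & q].
  by rewrite cons_uniq q_uniq in_cons negb_or eq_sym ya a_zq.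
have path_ayzq : path F a [:: y, z & q].
  by apply/andP; split=> //; apply: sub_path q_path => u v /and3P [].
have last_y' : last a [:: y, z & q] = y' by rewrite y'E.
by have := acF a _ uniq_ayzq isT path_ayzq; rewrite last_y' sF ay'.
Qed.

Lemma far_pendant F a b k : symmetric F -> irreflexive F -> acyclic_graph F ->
  (1 <= k)%N -> diam_le F k.+1 -> ~~ dist_le F k a b ->
  exists a1, [/\ pendant F a a1, a1 != a & ~~ dist_le F k.-1 a1 b].
Proof.
move=> sF irrF acF k1 diamF far_ab.
case: (dist_leSl (diamF a b)) => [ab|[a1 aa1 a1b]].
  by rewrite ab dist_le_refl in far_ab.
have a1a : a1 != a by apply: contraTneq aa1 => ->; rewrite irrF.
exists a1; split=> //; last first.
  by apply: contra far_ab => h; have := dist_le_stepl aa1 h; rewrite prednK.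
move=> x; apply/idP/eqP => [ax|->//]; apply/eqP/negPn/negP => xa1.
have xa : x != a by apply: contraTneq ax => ->; rewrite irrF.
(* Both [a1] and a second neighbour [x] of [a] reach [b] avoiding [a]: a cycle through [a]. *)
have ca1 := connect_del_vertex (dist_leS a1b) a1a far_ab.
have cx := connect_del_vertex (diamF x b) xa far_ab.
have sym_del : symmetric (del_vertex F a).
  by move=> u v; rewrite /del_vertex sF [(u != a) && _]andbC.
have := acyclic_del_vertex acF sF aa1 ax; rewrite eq_sym xa1 => /(_ isT)/negP; apply.
by apply: connect_trans ca1 _; rewrite (sym_connect_sym sym_del).
Qed.

Lemma connected_diam_le F : connected_graph F -> exists k, [forall x, forall y, dist_le F k x y].
Proof.
move=> conF; exists (\max_(p : 'I_n * 'I_n) xchoose (conF p.1 p.2))%N.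
apply/forallP => x; apply/forallP => y.
apply: dist_le_mono (xchooseP (conF x y)).
exact: (leq_bigmax (x, y)).
Qed.

Lemma far_pendant_pair F m u v : symmetric F -> irreflexive F -> is_tree F ->
  ~~ dist_le F m.+1 u v ->
  exists a b a1 b1, [/\ pendant F a a1, a1 != a, pendant F b b1, b1 != b &
    [/\ ~~ dist_le F m a b, ~~ dist_le F m b a, ~~ dist_le F m a1 b & ~~ dist_le F m b1 a]].
Proof.
move=> sF irrF [conF acF] far_uv.
case: (ex_minnP (connected_diam_le conF)) => D /forallP diamD minD.
have diamF : diam_le F D by move=> x y; have /forallP := diamD x; apply.
have mD : (m.+2 <= D)%N.
  by rewrite ltnNge; apply: contra far_uv => Dm; apply: dist_le_mono Dm (diamF u v).
have DE : D = D.-1.+1 by rewrite prednK // (leq_trans _ mD).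
set k := D.-1 in DE; rewrite DE in diamF.
have : ~~ [forall x, forall y, dist_le F k x y].
  by apply/negP => diamk; have := minD k diamk; rewrite DE ltnn.
rewrite negb_forall => /existsP [a]; rewrite negb_forall => /existsP [b far_ab].
have mk : (m < k)%N by rewrite -ltnS -DE.
have k1 : (0 < k)%N := leq_trans (ltn0Sn m) mk.
have mk' : (m <= k.-1)%N by rewrite -ltnS prednK.
have far_ba : ~~ dist_le F k b a by apply: contra far_ab; apply: dist_le_sym.
have [a1 [pa a1a far_a1b]] := far_pendant sF irrF acF k1 diamF far_ab.
have [b1 [pb b1b far_b1a]] := far_pendant sF irrF acF k1 diamF far_ba.
exists a, b, a1, b1; split=> //; split.
- exact: contra (dist_le_mono (ltnW mk)) far_ab.
- exact: contra (dist_le_mono (ltnW mk)) far_ba.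
- exact: contra (dist_le_mono mk') far_a1b.
- exact: contra (dist_le_mono mk') far_b1a.
Qed.

Lemma eq_is_tree (F1 F2 : rel 'I_n) : F1 =2 F2 -> is_tree F1 -> is_tree F2.
Proof.
move=> E [conF acF]; split=> [x y|x s s_uniq s_size].
  by have [k h] := conF x y; exists k; rewrite -(eq_dist_le k E).
by rewrite -(eq_path E) -E; apply: acF.
Qed.

End Trees.

Section FarWeight.
Variables (R : realFieldType) (n : nat) (w : 'I_n -> R).
Implicit Types (F : rel 'I_n) (u v a c : 'I_n).
Local Open Scope ring_scope.

Definition far_weight F k u : R := \sum_(v | ~~ dist_le F k u v) w v.

Lemma far_weightD1 F k u a : far_weight F k u =
  (if dist_le F k u a then 0 else w a) + \sum_(v | (v != a) && ~~ dist_le F k u v) w v.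
Proof. by rewrite /far_weight big_mkcond (bigD1 a) //= -big_mkcondr; case: dist_le. Qed.

Lemma far_weight_off F1 F2 k u a :
  (forall v, v != a -> dist_le F1 k u v = dist_le F2 k u v) ->
  dist_le F1 k u a -> ~~ dist_le F2 k u a -> far_weight F1 k u + w a = far_weight F2 k u.
Proof.
move=> off near far; rewrite !(far_weightD1 _ _ _ a) near (negbTE far) add0r addrC.
by congr (_ + _); apply: eq_bigl => v; case: eqVneq => //= va; rewrite off.
Qed.

Lemma far_weight_off_le F1 F2 k u a : (forall v, 0 <= w v) ->
  (forall v, v != a -> dist_le F1 k u v = dist_le F2 k u v) ->
  far_weight F2 k u <= far_weight F1 k u + w a.
Proof.
move=> w_ge0 off; rewrite !(far_weightD1 _ _ _ a).
have -> : \sum_(v | (v != a) && ~~ dist_le F2 k u v) w v =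
          \sum_(v | (v != a) && ~~ dist_le F1 k u v) w v.
  by apply: eq_bigl => v; case: eqVneq => //= va; rewrite off.
rewrite addrAC lerD2r.
by do 2 case: dist_le; rewrite ?add0r ?lerDr ?w_ge0 ?addr_ge0.
Qed.

Lemma far_weight_pendant F a c k : pendant F a c -> dist_le F k c a ->
  far_weight F k.+1 a = far_weight F k c.
Proof.
move=> Fa near; rewrite !(far_weightD1 _ _ _ a) near dist_le_refl.
by congr (_ + _); apply: eq_bigl => v; case: eqVneq => // va; rewrite (dist_le_pendant _ Fa va).
Qed.

Lemma far_weight_sub F1 F2 k u : subrel F1 F2 ->
  far_weight F1 k u = far_weight F2 k u + \sum_(v | ~~ dist_le F1 k u v && dist_le F2 k u v) w v.
Proof.
move=> sub; rewrite /far_weight (bigID (dist_le F2 k u)) /= addrC; congr (_ + _).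
apply: eq_bigl => v; apply/andP/idP => [[]//|far2]; split=> //.
exact: contra (sub_dist_le sub) far2.
Qed.

End FarWeight.

Section Outcome.
Variable n : nat.
Implicit Types (S : profile n) (A : {set 'I_n}) (u v x y a c : 'I_n).

Lemma outcome_sym S : symmetric (outcome S).
Proof. by move=> u v; rewrite /outcome orbC. Qed.

Lemma outcome_irr S : valid_profile S -> irreflexive (outcome S).
Proof. by move=> vS u; rewrite /outcome orbb; apply/negbTE/vS. Qed.

Lemma deviate_self S u A : deviate S u A u = A.
Proof. by rewrite /deviate eqxx. Qed.

Lemma dist_le_outcome_off S1 S2 a c1 c2 k u v :
  (forall x y, x != a -> y != a -> (y \in S1 x) = (y \in S2 x)) ->
  (forall x, outcome S1 a x -> x = c1) -> (forall x, outcome S2 a x -> x = c2) ->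
  c1 != a -> c2 != a -> u != a -> v != a ->
  dist_le (outcome S1) k u v = dist_le (outcome S2) k u v.
Proof.
move=> S12 a1 a2 c1a c2a ua va.
rewrite -(dist_le_del_vertex _ (outcome_sym S1) a1 c1a ua va).
rewrite -(dist_le_del_vertex _ (outcome_sym S2) a2 c2a ua va).
apply: eq_dist_le => x y; rewrite /del_vertex /outcome.
by case: (eqVneq x a) => //= xa; case: (eqVneq y a) => //= ya; rewrite ?andbF ?andbT ?S12.
Qed.

End Outcome.

Section NashTree.
Local Open Scope ring_scope.
Variables (R : realFieldType) (n : nat) (w : 'I_n -> R) (alpha : R) (beta : nat).
Variable S : profile n.
Hypotheses (w_gt0 : forall u, 0 < w u) (beta_gt1 : (1 < beta)%N).
Hypothesis S_nash : nash w alpha beta S.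
Local Notation G := (outcome S).
Local Notation far_weight := (far_weight w).

Lemma nash_deviate u A : valid_strategy u A ->
  alpha * #|S u|%:R + far_weight G beta u <=
  alpha * #|A|%:R + far_weight (outcome (deviate S u A)) beta u.
Proof. by move=> vA; have := S_nash.2 u A vA; rewrite /cost deviate_self. Qed.

Let beta_ge1 : (1 <= beta)%N := ltnW beta_gt1.
Let betaB1_ge1 : (1 <= beta.-1)%N. Proof. by rewrite -ltnS prednK. Qed.

(* A player [b] far from both ends of an edge [a a1] may buy the link [b a]. *)
Lemma nash_link_gain a a1 b : G a a1 ->
  ~~ dist_le G beta b a -> ~~ dist_le G beta b a1 -> w a + w a1 <= alpha.
Proof.
move=> aa1 far_a far_a1.
have a1a : a1 != a by apply: contraTneq aa1 => ->; rewrite (outcome_irr S_nash.1).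
have ba : b != a by apply: contraNneq far_a => ->; apply: dist_le_refl.
have aSb : a \notin S b.
  by apply: contra far_a => aSb; apply: dist_le_edge beta_ge1 _; rewrite /outcome aSb orbT.
have vA : valid_strategy b (a |: S b).
  by rewrite /valid_strategy in_setU1 negb_or ba; apply: S_nash.1.
have := nash_deviate vA; set G' := outcome (deviate _ _ _).
have subG : subrel G G'.
  move=> x y; rewrite /G' /outcome /deviate.
  by case: (eqVneq y b) => [->|_]; case: (eqVneq x b) => [->|_]; rewrite ?in_setU1;
    case/orP => ->; rewrite ?orbT.
have G'ba : G' b a by rewrite /G' /outcome /deviate eqxx setU11 orbT.
have near_a := dist_le_edge beta_ge1 G'ba.
have near_a1 : dist_le G' beta b a1.
  by rewrite -(prednK beta_ge1); apply: dist_le_stepl G'ba (dist_le_edge betaB1_ge1 (subG _ _ aa1)).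
have gain : w a + w a1 <= \sum_(v | ~~ dist_le G beta b v && dist_le G' beta b v) w v.
  rewrite (bigD1 a) /= ?far_a ?near_a // (bigD1 a1) /= ?far_a1 ?near_a1 ?a1a //.
  by rewrite addrA lerDl sumr_ge0 // => v _; apply: ltW.
rewrite cardsU1 aSb natrD mulrDr mulr1 (far_weight_sub _ _ _ subG); lra.
Qed.

(* The owner [a1] of the link to a leaf [a] may drop it. *)
Lemma nash_drop_pendant a a1 : pendant G a a1 -> a1 != a -> a \in S a1 -> alpha <= w a.
Proof.
move=> Ga a1a aSa1.
have vA : valid_strategy a1 (S a1 :\ a).
  by rewrite /valid_strategy in_setD1 negb_and; apply/orP; right; apply: S_nash.1.
have := nash_deviate vA; set S' := deviate _ _ _.
have S'S x y : y != a -> (y \in S' x) = (y \in S x).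
  by move=> ya; rewrite /S' /deviate; case: eqVneq => [->|//]; rewrite in_setD1 ya.
have aa1 : a != a1 by rewrite eq_sym.
have G'a x : outcome S' a x -> x = a1.
  have [//|xa1] := eqVneq x a1.
  by rewrite /outcome /S' /deviate (negbTE xa1) (negbTE aa1) => Gax; apply/eqP; rewrite -Ga.
have off v : v != a -> dist_le G beta a1 v = dist_le (outcome S') beta a1 v.
  move=> va; apply: (dist_le_outcome_off (a := a) (c1 := a1) (c2 := a1)) => //.
  - by move=> x y _ ya; rewrite S'S.
  - by move=> x Gax; apply/eqP; rewrite -Ga.
have := far_weight_off_le (fun v => ltW (w_gt0 v)) off.
rewrite (cardsD1 a (S a1)) aSa1 natrD mulrDr mulr1; lra.
Qed.

Lemma nash_pendant_owner a a1 b : pendant G a a1 -> a1 != a ->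
  ~~ dist_le G beta b a -> ~~ dist_le G beta b a1 -> a \notin S a1.
Proof.
move=> Ga a1a far_a far_a1; apply/negP => aSa1.
have aa1 : G a a1 by rewrite Ga.
have := nash_link_gain aa1 far_a far_a1; have := nash_drop_pendant Ga a1a aSa1.
have := w_gt0 a1; lra.
Qed.

(* A leaf [a] owning its link may move it from [a1] to [b1]. *)
Lemma nash_pendant_swap a a1 b1 : pendant G a a1 -> a1 != a -> a \notin S a1 ->
  b1 != a -> ~~ dist_le G beta.-1 b1 a ->
  far_weight G beta.-1 a1 + w a <= far_weight G beta.-1 b1.
Proof.
move=> Ga a1a aSa1 b1a far_b1a.
have aS x : a \notin S x.
  apply: contraNN aSa1 => aSx; suff <- : x = a1 by [].
  by apply/eqP; rewrite -Ga /outcome aSx.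
have Sa : S a = [set a1].
  apply/setP => x; rewrite in_set1; apply/idP/eqP => [xSa|->].
    by apply/eqP; rewrite -Ga /outcome xSa orbT.
  by have := Ga a1; rewrite eqxx /outcome (negbTE aSa1).
have vA : valid_strategy a [set b1] by rewrite /valid_strategy in_set1 eq_sym.
have := nash_deviate vA; set S' := deviate _ _ _; rewrite Sa !cards1.
have G'a : pendant (outcome S') a b1.
  move=> x; rewrite /outcome /S' /deviate eqxx in_set1.
  case: (eqVneq x a) => [->|xa]; last by rewrite (negbTE (aS x)).
  by rewrite in_set1 eq_sym (negbTE b1a).
have off v : v != a -> dist_le (outcome S') beta.-1 b1 v = dist_le G beta.-1 b1 v.
  move=> va; apply: (dist_le_outcome_off (a := a) (c1 := b1) (c2 := a1)) => //.
  - by move=> x y xa _; rewrite /S' /deviate (negbTE xa).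
  - by move=> x; rewrite G'a => /eqP.
  - by move=> x; rewrite Ga => /eqP.
have near_b1a : dist_le (outcome S') beta.-1 b1 a.
  by apply: dist_le_edge betaB1_ge1 _; rewrite outcome_sym G'a.
have near_a1a : dist_le G beta.-1 a1 a.
  by apply: dist_le_edge betaB1_ge1 _; rewrite outcome_sym Ga.
have := far_weight_pendant w Ga near_a1a; have := far_weight_pendant w G'a near_b1a.
rewrite (prednK beta_ge1) -(far_weight_off w off near_b1a far_b1a); lra.
Qed.

Lemma nash_far_pendants a a1 b b1 : pendant G a a1 -> a1 != a ->
  ~~ dist_le G beta a b -> ~~ dist_le G beta a1 b -> ~~ dist_le G beta b1 a ->
  far_weight G beta.-1 a1 + w a <= far_weight G beta.-1 b1.
Proof.
move=> Ga a1a far_ab far_a1b far_b1a.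
have b1a : b1 != a by apply: contraNneq far_b1a => ->; apply: dist_le_refl.
have far_ba := contra (dist_le_sym (outcome_sym S)) far_ab.
have far_ba1 := contra (dist_le_sym (outcome_sym S)) far_a1b.
have aSa1 := nash_pendant_owner Ga a1a far_ba far_ba1.
exact: nash_pendant_swap Ga a1a aSa1 b1a (contra (dist_le_mono (leq_pred _)) far_b1a).
Qed.

End NashTree.

Local Open Scope ring_scope.

Theorem proposition9 (R : realFieldType) (n : nat) (w : 'I_n -> R) (alpha : R)
  (beta : nat) :
  (forall u, 0 < w u) -> 0 < alpha -> (1 <= beta)%N -> (beta <= n.-1)%N ->
  star_celebrity_game w alpha beta -> (1 < beta)%N ->
  forall T : rel 'I_n, nash_graph w alpha beta T -> is_tree T ->
  diam_le T beta.+1.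
Proof.
move=> w_gt0 _ _ _ _ beta_gt1 T [S [S_nash TE]] T_tree u v.
rewrite (eq_dist_le _ TE); apply/negPn/negP => far_uv.
have [a [b [a1 [b1 [Ga a1a Gb b1b [far_ab far_ba far_a1b far_b1a]]]]]] :=
  far_pendant_pair (outcome_sym S) (outcome_irr S_nash.1) (eq_is_tree TE T_tree) far_uv.
have := nash_far_pendants w_gt0 beta_gt1 S_nash Ga a1a far_ab far_a1b far_b1a.
have := nash_far_pendants w_gt0 beta_gt1 S_nash Gb b1b far_ba far_b1a far_a1b.
have := w_gt0 a; have := w_gt0 b; lra.
Qed.
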